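(* Let $a_0,\dots,a_4,b_0,\dots,b_4>0$. Assume $Q<0$, $z_0>0$ (so that $\xi^{ext}_1,\dots,\xi^{ext}_4$ are real) and $\xi_{min}>0$. If $P_5(\xi_{min})>0$ and $P_5(\xi_{max})<0$, then the quartic operator $\mathcal{Q}$ has at least three fixed points in $\mathbb{R}_>^2$, i.e. $N_>^{fix}(\mathcal{Q})\ge 3$.
   Context: Quartic operator on $\mathbb{R}_+^2=\{(x,y):x\ge0,y\ge0\}$: $\mathcal{Q}(x,y)=\big(\sum_{i=0}^4\binom{4}{i}a_i x^{4-i}y^i,\ \sum_{i=0}^4\binom{4}{i}b_i x^{4-i}y^i\big)$; $\mathbb{R}_>^2=\{(x,y):x>0,y>0\}$; $N_>^{fix}(\mathcal{Q})$ is the number of fixed points of $\mathcal{Q}$ in $\mathbb{R}_>^2$. Set $\mu_0=a_4$, $\mu_1=4a_3-b_4$, $\mu_2=6a_2-4b_3$, $\mu_3=4a_1-6b_2$, $\mu_4=a_0-4b_1$, $\mu_5=b_0$, and $P_5(\xi)=\mu_0\xi^5+\mu_1\xi^4+\mu_2\xi^3+\mu_3\xi^2+\mu_4\xi-\mu_5$. Define $p=\frac{15\mu_0\mu_2-6\mu_1^2}{25\mu_0^2}$, $q=\frac{50\mu_0^2\mu_3+8\mu_1^3-30\mu_0\mu_1\mu_2}{125\mu_0^3}$, $r=\frac{15\mu_0\mu_1^2\mu_2-50\mu_0^2\mu_1\mu_3-3\mu_1^4+125\mu_0^3\mu_4}{625\mu_0^4}$ (so that $\omega^4+p\omega^2+q\omega+r=P_5'(\omega-\frac{\mu_1}{5\mu_0})/(5\mu_0)$),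 $a=-\frac{p^2}{12}-r$, $b=-\frac{p^3}{108}+\frac{pr}{3}-\frac{q^2}{8}$, $Q=(a/3)^3+(b/2)^2$. When $Q<0$ (hence $a<0$), let $\alpha\in[0,\pi]$ with $\cos\alpha=-\frac{b}{2}\left(-\frac{3}{a}\right)^{3/2}$ and $z_0=2\sqrt{-a/3}\,\cos\!\left(\frac{2\pi}{3}+\frac{\alpha}{3}\right)-\frac{p}{3}$. For $z_0>0$ put $\xi^{ext}_{1,2}=\frac12\Big(\sqrt{2z_0}\pm\sqrt{2z_0-4\big(\frac p2+z_0+\frac{q}{2\sqrt{2z_0}}\big)}\Big)-\frac{\mu_1}{5\mu_0}$, $\xi^{ext}_{3,4}=\frac12\Big(-\sqrt{2z_0}\pm\sqrt{2z_0-4\big(\frac p2+z_0-\frac{q}{2\sqrt{2z_0}}\big)}\Big)-\frac{\mu_1}{5\mu_0}$, and $\xi_{min}=\min_j\xi^{ext}_j$, $\xi_{max}=\max_j\xi^{ext}_j$. *)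

From Stdlib Require Import Reals.
Open Scope R_scope.

Definition binom4 (i : nat) : R :=
  match i with 0 => 1 | 1 => 4 | 2 => 6 | 3 => 4 | 4 => 1 | _ => 0 end.

Definition quartic_form (c : nat -> R) (x y : R) : R :=
  binom4 0 * c 0%nat * x^4 + binom4 1 * c 1%nat * x^3 * y
  + binom4 2 * c 2%nat * x^2 * y^2 + binom4 3 * c 3%nat * x * y^3
  + binom4 4 * c 4%nat * y^4.

Definition quartic_op (a b : nat -> R) (p : R * R) : R * R :=
  (quartic_form a (fst p) (snd p), quartic_form b (fst p) (snd p)).

Definition pos_fixed_point (a b : nat -> R) (p : R * R) : Prop :=
  0 < fst p /\ 0 < snd p /\ quartic_op a b p = p.

Section Params.
Variables (a b : nat -> R).

Definition mu0 := a 4%nat.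
Definition mu1 := 4 * a 3%nat - b 4%nat.
Definition mu2 := 6 * a 2%nat - 4 * b 3%nat.
Definition mu3 := 4 * a 1%nat - 6 * b 2%nat.
Definition mu4 := a 0%nat - 4 * b 1%nat.
Definition mu5 := b 0%nat.

Definition P5 (xi : R) : R :=
  mu0 * xi^5 + mu1 * xi^4 + mu2 * xi^3 + mu3 * xi^2 + mu4 * xi - mu5.

Definition pp := (15 * mu0 * mu2 - 6 * mu1^2) / (25 * mu0^2).
Definition qq := (50 * mu0^2 * mu3 + 8 * mu1^3 - 30 * mu0 * mu1 * mu2) / (125 * mu0^3).
Definition rr := (15 * mu0 * mu1^2 * mu2 - 50 * mu0^2 * mu1 * mu3 - 3 * mu1^4
                  + 125 * mu0^3 * mu4) / (625 * mu0^4).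
Definition aa := - pp^2 / 12 - rr.
Definition bb := - pp^3 / 108 + pp * rr / 3 - qq^2 / 8.
Definition QQ := (aa / 3)^3 + (bb / 2)^2.

Definition alpha := acos (- (bb / 2) * (sqrt (- 3 / aa))^3).
Definition z0 := 2 * sqrt (- aa / 3) * cos (2 * PI / 3 + alpha / 3) - pp / 3.

Definition shift := mu1 / (5 * mu0).
Definition s2z := sqrt (2 * z0).

Definition xi1 := (s2z + sqrt (2 * z0 - 4 * (pp / 2 + z0 + qq / (2 * s2z)))) / 2 - shift.
Definition xi2 := (s2z - sqrt (2 * z0 - 4 * (pp / 2 + z0 + qq / (2 * s2z)))) / 2 - shift.
Definition xi3 := (- s2z + sqrt (2 * z0 - 4 * (pp / 2 + z0 - qq / (2 * s2z)))) / 2 - shift.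
Definition xi4 := (- s2z - sqrt (2 * z0 - 4 * (pp / 2 + z0 - qq / (2 * s2z)))) / 2 - shift.

Definition xi_min := Rmin (Rmin xi1 xi2) (Rmin xi3 xi4).
Definition xi_max := Rmax (Rmax xi1 xi2) (Rmax xi3 xi4).
End Params.

(* Fixed points of Q in the open quadrant are found on rays y = xi * x.
   Writing A(xi) = quartic_form a 1 xi > 0, homogeneity gives
   Q(x, xi x) = x^4 (A(xi), xi A(xi) - P5(xi)), so every positive root xi
   of P5 yields the fixed point (x, xi x) with x^3 A(xi) = 1; distinct roots
   give distinct points because they lie on distinct rays.

   Positive roots come from sign changes of P5 along
     0 < xi_min < xi_max < T :
   P5(0) = -b0 < 0, P5(xi_min) > 0, P5(xi_max) < 0 and P5(T) > 0 for T
   large, since the leading coefficient mu0 = a4 is positive.  The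
   intermediate value theorem then provides three distinct positive roots.
   The hypotheses Q < 0 and z0 > 0 only guarantee that the xi_j are the real
   critical points of P5; the counting argument itself does not need them. *)

From Stdlib Require Import Reals Lra Psatz.
Open Scope R_scope.

Lemma root_between (f : R -> R) (x y : R) :
  continuity f -> x < y -> f x * f y < 0 ->
  exists z, x < z < y /\ f z = 0.
Proof.
  intros Hf Hxy Hsign.
  destruct (Rlt_or_le (f x) 0) as [Hx | Hx].
  - assert (Hy : 0 < f y) by nra.
    destruct (IVT f x y Hf Hxy Hx Hy) as [z [[H1 H2] Hz]].
    exists z; split; [split|]; auto.
    + destruct H1 as [H1 | H1]; [exact H1 | subst; lra].
    + destruct H2 as [H2 | H2]; [exact H2 | subst; lra].
  - assert (Hx' : 0 < f x)
      by (destruct Hx as [Hx | Hx]; [exact Hx | rewrite <- Hx in Hsign; lra]).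
    assert (Hy : f y < 0) by nra.
    assert (Hg : continuity (fun t => - f t)) by (apply continuity_opp, Hf).
    destruct (IVT (fun t => - f t) x y Hg Hxy ltac:(lra) ltac:(lra))
      as [z [[H1 H2] Hz]].
    exists z; split; [split | lra].
    + destruct H1 as [H1 | H1]; [exact H1 | subst; lra].
    + destruct H2 as [H2 | H2]; [exact H2 | subst; lra].
Qed.

Lemma three_sign_changes (f : R -> R) (t0 t1 t2 t3 : R) :
  continuity f -> t0 < t1 -> t1 < t2 -> t2 < t3 ->
  f t0 < 0 -> 0 < f t1 -> f t2 < 0 -> 0 < f t3 ->
  exists z1 z2 z3,
    t0 < z1 < t1 /\ t1 < z2 < t2 /\ t2 < z3 < t3 /\
    f z1 = 0 /\ f z2 = 0 /\ f z3 = 0.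
Proof.
  intros Hf H01 H12 H23 F0 F1 F2 F3.
  destruct (root_between f t0 t1 Hf H01 ltac:(nra)) as [z1 [I1 E1]].
  destruct (root_between f t1 t2 Hf H12 ltac:(nra)) as [z2 [I2 E2]].
  destruct (root_between f t2 t3 Hf H23 ltac:(nra)) as [z3 [I3 E3]].
  exists z1, z2, z3; tauto.
Qed.

Lemma P5_continuous (a b : nat -> R) : continuity (P5 a b).
Proof. unfold P5. reg. Qed.

(* For t >= 1, a monomial of degree at most 4 is bounded below by
   -|m| t^4; this is what makes the degree-5 term dominate. *)
Lemma monomial_lower_bound (m t : R) (k : nat) :
  1 <= t -> (k <= 4)%nat -> - Rabs m * t ^ 4 <= m * t ^ k.
Proof.
  intros Ht Hk.
  pose proof (Rle_pow t k 4 Ht Hk).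
  assert (0 <= t ^ k) by (apply pow_le; lra).
  pose proof (Rle_abs m). pose proof (Rle_abs (- m)). rewrite Rabs_Ropp in *.
  nra.
Qed.

Lemma P5_pos_large (a b : nat -> R) (t : R) :
  0 < mu0 a -> 1 <= t ->
  Rabs (mu1 a b) + Rabs (mu2 a b) + Rabs (mu3 a b) + Rabs (mu4 a b) + Rabs (mu5 b)
    < mu0 a * t ->
  0 < P5 a b t.
Proof.
  intros Hmu0 Ht Hdom.
  pose proof (monomial_lower_bound (mu1 a b) t 4 Ht ltac:(lia)).
  pose proof (monomial_lower_bound (mu2 a b) t 3 Ht ltac:(lia)).
  pose proof (monomial_lower_bound (mu3 a b) t 2 Ht ltac:(lia)).
  pose proof (monomial_lower_bound (mu4 a b) t 1 Ht ltac:(lia)).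
  pose proof (monomial_lower_bound (- mu5 b) t 0 Ht ltac:(lia)).
  rewrite Rabs_Ropp in *.
  assert (Ht4 : 1 <= t ^ 4) by (apply pow_R1_Rle; lra).
  assert (Hlead : 0 < t ^ 4 * (mu0 a * t -
    (Rabs (mu1 a b) + Rabs (mu2 a b) + Rabs (mu3 a b) + Rabs (mu4 a b) + Rabs (mu5 b))))
    by (apply Rmult_lt_0_compat; lra).
  unfold P5. simpl pow in *. nra.
Qed.

Lemma P5_eventually_pos (a b : nat -> R) (M : R) :
  0 < mu0 a -> exists T, M < T /\ 0 < P5 a b T.
Proof.
  intros Hmu0.
  set (S := Rabs (mu1 a b) + Rabs (mu2 a b) + Rabs (mu3 a b)
            + Rabs (mu4 a b) + Rabs (mu5 b)).
  exists (Rmax 1 (Rmax (M + 1) (S / mu0 a + 1))).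
  pose proof (Rmax_l 1 (Rmax (M + 1) (S / mu0 a + 1))).
  pose proof (Rmax_r 1 (Rmax (M + 1) (S / mu0 a + 1))).
  pose proof (Rmax_l (M + 1) (S / mu0 a + 1)).
  pose proof (Rmax_r (M + 1) (S / mu0 a + 1)).
  split; [lra|].
  apply P5_pos_large; [exact Hmu0 | lra |].
  assert (Hscale : S = mu0 a * (S / mu0 a)) by (field; lra).
  fold S. rewrite Hscale at 1. apply Rmult_lt_compat_l; lra.
Qed.

Lemma xi_min_le_xi_max (a b : nat -> R) : xi_min a b <= xi_max a b.
Proof.
  unfold xi_min, xi_max.
  pose proof (Rmin_l (Rmin (xi1 a b) (xi2 a b)) (Rmin (xi3 a b) (xi4 a b))).
  pose proof (Rmin_l (xi1 a b) (xi2 a b)).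
  pose proof (Rmax_l (Rmax (xi1 a b) (xi2 a b)) (Rmax (xi3 a b) (xi4 a b))).
  pose proof (Rmax_l (xi1 a b) (xi2 a b)).
  lra.
Qed.

Lemma quartic_form_homogeneous (c : nat -> R) (t x y : R) :
  quartic_form c (t * x) (t * y) = t ^ 4 * quartic_form c x y.
Proof. unfold quartic_form. ring. Qed.

(* On the ray y = xi * x the second component of Q is xi times the first
   one, corrected by P5: this is why roots of P5 are the fixed rays. *)
Lemma quartic_form_b_on_ray (a b : nat -> R) (xi : R) :
  quartic_form b 1 xi = xi * quartic_form a 1 xi - P5 a b xi.
Proof.
  unfold quartic_form, binom4, P5, mu0, mu1, mu2, mu3, mu4, mu5. ring.
Qed.

Lemma quartic_form_pos (c : nat -> R) (x y : R) :
  (forall i : nat, (i <= 4)%nat -> 0 < c i) -> 0 < x -> 0 < y ->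
  0 < quartic_form c x y.
Proof.
  intros Hc Hx Hy.
  pose proof (Hc 0%nat ltac:(lia)). pose proof (Hc 1%nat ltac:(lia)).
  pose proof (Hc 2%nat ltac:(lia)). pose proof (Hc 3%nat ltac:(lia)).
  pose proof (Hc 4%nat ltac:(lia)).
  unfold quartic_form, binom4.
  assert (0 < x ^ 4) by (apply pow_lt; lra).
  assert (0 < x ^ 3 * y) by (apply Rmult_lt_0_compat; [apply pow_lt|]; lra).
  assert (0 < x ^ 2 * y ^ 2) by (apply Rmult_lt_0_compat; apply pow_lt; lra).
  assert (0 < x * y ^ 3) by (apply Rmult_lt_0_compat; [|apply pow_lt]; lra).
  assert (0 < y ^ 4) by (apply pow_lt; lra).
  nra.
Qed.

Lemma inverse_cube_root (A : R) : 0 < A -> exists x, 0 < x /\ x ^ 3 * A = 1.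
Proof.
  intros HA.
  exists (Rpower A (- (1 / 3))).
  assert (Hx : 0 < Rpower A (- (1 / 3))) by (unfold Rpower; apply exp_pos).
  split; [exact Hx|].
  rewrite <- Rpower_pow by exact Hx. rewrite Rpower_mult.
  replace (- (1 / 3) * INR 3) with (Ropp 1) by (simpl; field).
  rewrite Rpower_Ropp, Rpower_1 by exact HA. field. lra.
Qed.

Lemma fixed_point_of_root (a b : nat -> R) (xi : R) :
  (forall i : nat, (i <= 4)%nat -> 0 < a i /\ 0 < b i) ->
  0 < xi -> P5 a b xi = 0 ->
  exists x, 0 < x /\ pos_fixed_point a b (x, xi * x).
Proof.
  intros Hab Hxi Hroot.
  set (A := quartic_form a 1 xi).
  assert (HA : 0 < A).
  { apply quartic_form_pos; [intros i Hi; apply Hab, Hi | lra | exact Hxi]. }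
  destruct (inverse_cube_root A HA) as [x [Hx Hx3]].
  assert (Hray : forall c, quartic_form c x (xi * x) = x ^ 4 * quartic_form c 1 xi).
  { intro c. rewrite <- (quartic_form_homogeneous c x 1 xi). f_equal; ring. }
  exists x. split; [exact Hx|].
  split; [exact Hx|]. split; [simpl; nra|].
  unfold quartic_op; simpl fst; simpl snd.
  rewrite !Hray, (quartic_form_b_on_ray a b xi), Hroot. fold A.
  f_equal.
  - replace (x ^ 4 * A) with (x * (x ^ 3 * A)) by ring. rewrite Hx3. ring.
  - replace (x ^ 4 * (xi * A - 0)) with (xi * x * (x ^ 3 * A)) by ring.
    rewrite Hx3. ring.
Qed.

Lemma ray_points_distinct (x1 x2 xi1 xi2 : R) :
  0 < x2 -> xi1 <> xi2 -> (x1, xi1 * x1) <> (x2, xi2 * x2).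
Proof.
  intros Hx2 Hxi Heq. injection Heq as Ex Ey. subst x1.
  apply Hxi, (Rmult_eq_reg_r x2); lra.
Qed.

Theorem theorem3 (a b : nat -> R) :
  (forall i : nat, (i <= 4)%nat -> 0 < a i /\ 0 < b i) ->
  QQ a b < 0 ->
  0 < z0 a b ->
  0 < xi_min a b ->
  0 < P5 a b (xi_min a b) ->
  P5 a b (xi_max a b) < 0 ->
  exists p1 p2 p3 : R * R,
    pos_fixed_point a b p1 /\ pos_fixed_point a b p2 /\ pos_fixed_point a b p3 /\
    p1 <> p2 /\ p1 <> p3 /\ p2 <> p3.
Proof.
  intros Hab _ _ Hmin Pmin Pmax.
  destruct (Hab 0%nat ltac:(lia)) as [_ Hb0].
  destruct (Hab 4%nat ltac:(lia)) as [Ha4 _].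
  assert (P0 : P5 a b 0 < 0) by (unfold P5, mu5; simpl; lra).
  assert (HmM : xi_min a b < xi_max a b).
  { destruct (Rle_lt_or_eq_dec _ _ (xi_min_le_xi_max a b)) as [H | H];
      [exact H | rewrite H in Pmin; lra]. }
  destruct (P5_eventually_pos a b (xi_max a b) Ha4) as [T [HMT PT]].
  destruct (three_sign_changes (P5 a b) 0 (xi_min a b) (xi_max a b) T
              (P5_continuous a b) Hmin HmM HMT P0 Pmin Pmax PT)
    as [z1 [z2 [z3 [I1 [I2 [I3 [E1 [E2 E3]]]]]]]].
  destruct (fixed_point_of_root a b z1 Hab ltac:(lra) E1) as [x1 [Hx1 F1]].
  destruct (fixed_point_of_root a b z2 Hab ltac:(lra) E2) as [x2 [Hx2 F2]].
  destruct (fixed_point_of_root a b z3 Hab ltac:(lra) E3) as [x3 [Hx3 F3]].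
  exists (x1, z1 * x1), (x2, z2 * x2), (x3, z3 * x3).
  split; [exact F1|]. split; [exact F2|]. split; [exact F3|].
  split; [|split]; apply ray_points_distinct; lra.
Qed.
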